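(* Let $\alpha\in(0,1)$ and $\theta>-\alpha$, and let $$V_{N,J}=\frac{(\theta+\alpha)_{J-1\uparrow\alpha}}{(\theta+1)_{N-1}},\qquad N\ge 1,\ 1\le J\le N,$$ be the Gibbs coefficients of the two-parameter Poisson–Dirichlet $(\alpha,\theta)$ model. Let $n\ge1$, $1\le j\le n$, and let $c_1,\dots,c_n\ge 0$ be integers with $\sum_{i=1}^n c_i=j$ and $\sum_{i=1}^n i\,c_i=n$ (set $c_i=0$ for $i>n$). Let $m\ge 0$ and $k\ge1$ be integers. Define $$\hat U^{new}_{n+m}(k)=(1-\alpha)_k\binom{m}{k}\sum_{l=1}^{m-k+1}\frac{V_{n+m+1,\,j+l}}{V_{n,j}}\,S^{-1,-\alpha,-(n-j\alpha)}_{m-k,\,l-1},$$ $$\hat U^{old}_{n+m}(k)=\sum_{i=1}^{k}c_i\binom{m}{k-i}(i-\alpha)_{k-i+1}\sum_{l=0}^{m-k+i}\frac{V_{n+m+1,\,j+l}}{V_{n,j}}\,S^{-1,-\alpha,-(n-j\alpha-i+\alpha)}_{m-k+i,\,l},$$ and $\hat U^{\alpha,\theta}_{n+m}(k)=\hat U^{old}_{n+m}(k)+\hat U^{new}_{n+m}(k)$. Then $$\hat U^{\alpha,\theta}_{n+m}(k)=\sum_{i=1}^{k}c_i\binom{m}{k-i}\frac{(\theta+n-i+\alpha)_{m-k+i}\,(i-\alpha)_{k+1-i}}{(\theta+n)_{m+1}}+\frac{\theta+j\alpha}{\theta+n}\binom{m}{k}\frac{(1-\alpha)_k\,(\theta+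\alpha+n)_{m-k}}{(\theta+n+1)_m}.$$
   Context: Notation: $(x)_N=x(x+1)\cdots(x+N-1)$ is the rising factorial and $(x)_{N\uparrow y}=x(x+y)(x+2y)\cdots(x+(N-1)y)$ the generalized rising factorial, with $(x)_0=(x)_{0\uparrow y}=1$. The non-central generalized Stirling numbers $S^{-1,-\alpha,\gamma}_{N,\xi}$ ($0\le\xi\le N$) are defined as the connection coefficients in the polynomial identity (in $x$) $$(x-\gamma)_N=\sum_{\xi=0}^{N}S^{-1,-\alpha,\gamma}_{N,\xi}\,(x)_{\xi\uparrow\alpha}.$$ Conventions: $\binom{m}{r}=0$ if $r>m$ or $r<0$, and any summand multiplied by such a vanishing binomial coefficient (e.g. when $k>m$ in the new-species term, or $k-i>m$ in the old-species term) is taken to be $0$; empty sums are $0$. Interpretation: in a species sampling model with a two-parameter Poisson–Dirichlet $(\alpha,\theta)$ prior, a basic sample of size $n$ shows $j$ distinct species with $c_i$ species observed exactly $i$ times; $\hat U^{\alpha,\theta}_{n+m}(k)$ is the Bayesian nonparametric estimator of the probability that observation $n+m+1$ is a species observed exactly $k$ times among the first $n+m$ observations, with $\hat U^{old}$ and $\hat U^{new}$ the contributions from species already in the basic sample and from species first appearing in the additional $m$ observations. *)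

From HB Require Import structures.
From mathcomp Require Import all_boot all_order all_algebra.
Set Implicit Arguments. Unset Strict Implicit. Unset Printing Implicit Defensive.
Import Order.TTheory GRing.Theory Num.Theory.
Local Open Scope ring_scope.

Definition rising {R : ringType} (x : R) (N : nat) : R :=
  \prod_(i < N) (x + i%:R).

Definition gen_rising {R : ringType} (x : R) (N : nat) (y : R) : R :=
  \prod_(i < N) (x + i%:R * y).

(* S is the family of non-central generalized Stirling numbers
   S N xi gamma = S^{-1,-alpha,gamma}_{N,xi}, i.e. the connection coefficients
   (x - gamma)_N = sum_{xi=0}^N S N xi gamma (x)_{xi up alpha}, as a polynomial
   identity in x. *)
Definition is_gen_stirling {R : ringType} (alpha : R) (S : nat -> nat -> R -> R) : Prop :=
  forall (N : nat) (gamma : R),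
    \prod_(i < N) ('X - gamma%:P + i%:R%:P)
      = \sum_(xi < N.+1) S N xi gamma *: \prod_(i < xi) ('X + (i%:R * alpha)%:P).

Definition Vpd {R : fieldType} (alpha theta : R) (N J : nat) : R :=
  gen_rising (theta + alpha) J.-1 alpha / rising (theta + 1) N.-1.

From HB Require Import structures.
From mathcomp Require Import all_boot all_order all_algebra.
From mathcomp Require Import zify ring lra.
Set Implicit Arguments. Unset Strict Implicit. Unset Printing Implicit Defensive.
Import Order.TTheory GRing.Theory Num.Theory.
Local Open Scope ring_scope.

(* The ratio V_{n+m+1,j+l} / V_{n,j} equals (theta + j alpha)_{l up alpha} / (theta + n)_{m+1},
   so each inner sum over l is the Stirling connection identity evaluated at
   x = theta + j alpha (or, after pulling out one factor, at theta + (j+1) alpha),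
   and therefore collapses to a single rising factorial. *)

Lemma rising_add (R : nzRingType) (x : R) (a b : nat) :
  rising x (a + b) = rising x a * rising (x + a%:R) b.
Proof.
rewrite /rising big_split_ord /=; congr (_ * _).
by apply: eq_bigr => i _; rewrite natrD addrA.
Qed.

Lemma risingS (R : nzRingType) (x : R) (b : nat) :
  rising x b.+1 = x * rising (x + 1) b.
Proof.
rewrite /rising big_ord_recl /= addr0; congr (_ * _).
by apply: eq_bigr => i _; rewrite /bump add1n -addn1 natrD (addrC _ 1) addrA.
Qed.

Lemma gen_rising_add (R : nzRingType) (x y : R) (a b : nat) :
  gen_rising x (a + b) y = gen_rising x a y * gen_rising (x + a%:R * y) b y.
Proof.
rewrite /gen_rising big_split_ord /=; congr (_ * _).
by apply: eq_bigr => i _; rewrite natrD mulrDl addrA.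
Qed.

Lemma gen_risingS (R : nzRingType) (x y : R) (b : nat) :
  gen_rising x b.+1 y = x * gen_rising (x + y) b y.
Proof.
rewrite /gen_rising big_ord_recl /= mul0r addr0; congr (_ * _).
apply: eq_bigr => i _.
by rewrite /bump add1n -addn1 natrD mulrDl mul1r (addrC _ y) addrA.
Qed.

Lemma rising_gt0 (R : numDomainType) (x : R) (N : nat) :
  0 < x -> 0 < rising x N.
Proof. by move=> x_gt0; apply: prodr_gt0 => i _; rewrite ltr_wpDr. Qed.

Lemma gen_rising_gt0 (R : numDomainType) (x y : R) (N : nat) :
  0 < x -> 0 <= y -> 0 < gen_rising x N y.
Proof.
move=> x_gt0 y_ge0; apply: prodr_gt0 => i _.
by rewrite ltr_wpDr // mulr_ge0.
Qed.

Section GenStirlingEval.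

Variables (R : comNzRingType) (alpha : R) (S : nat -> nat -> R -> R).
Hypothesis S_stirling : is_gen_stirling alpha S.

Lemma gen_stirling_eval (N : nat) (g x : R) :
  \sum_(xi < N.+1) S N xi g * gen_rising x xi alpha = rising (x - g) N.
Proof.
have := congr1 (horner^~ x) (S_stirling N g).
rewrite horner_prod horner_sum => eq_x.
rewrite /rising (eq_bigr (fun i : 'I_N => ('X - g%:P + i%:R%:P).[x])); last first.
  by move=> i _; rewrite !hornerE.
rewrite eq_x; apply: eq_bigr => xi _; rewrite hornerZ horner_prod; congr (_ * _).
by apply: eq_bigr => i _; rewrite !hornerE.
Qed.

Lemma gen_stirling_evalS (N : nat) (g x : R) :
  \sum_(xi < N.+1) S N xi g * gen_rising x xi.+1 alpha
    = x * rising (x + alpha - g) N.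
Proof.
rewrite -gen_stirling_eval mulr_sumr.
by apply: eq_bigr => xi _; rewrite gen_risingS mulrCA.
Qed.

End GenStirlingEval.

Lemma Vpd_ratio (R : realFieldType) (alpha theta : R) (n j m l : nat) :
  0 <= alpha -> alpha <= 1 -> - alpha < theta -> (1 <= n)%N -> (1 <= j)%N ->
  Vpd alpha theta (n + m + 1) (j + l) / Vpd alpha theta n j
    = gen_rising (theta + j%:R * alpha) l alpha / rising (theta + n%:R) m.+1.
Proof.
move=> alpha_ge0 alpha_le1 theta_gt; case: n => // n _; case: j => // j _.
rewrite /Vpd (_ : (j.+1 + l).-1 = j + l)%N; last by lia.
rewrite (_ : (n.+1 + m + 1).-1 = n + m.+1)%N; last by lia.
rewrite gen_rising_add rising_add.
have -> : theta + alpha + j%:R * alpha = theta + j.+1%:R * alpha.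
  by rewrite mulrSr; ring.
have -> : theta + 1 + n%:R = theta + n.+1%:R by rewrite mulrSr; ring.
have V_nj_neq0 : gen_rising (theta + alpha) j alpha != 0.
  by rewrite gt_eqF // gen_rising_gt0 //; lra.
have rising1_neq0 : rising (theta + 1) n != 0.
  by rewrite gt_eqF // rising_gt0 //; lra.
have risingn_neq0 : rising (theta + n.+1%:R) m.+1 != 0.
  have : 1 <= n.+1%:R :> R by rewrite ler1n.
  by move=> n_ge1; rewrite gt_eqF // rising_gt0 //; lra.
by field; rewrite V_nj_neq0 rising1_neq0 risingn_neq0.
Qed.

Section PDGibbsSums.

Variables (R : realFieldType) (alpha theta : R) (S : nat -> nat -> R -> R).
Variables (n j m : nat).
Hypotheses (alpha_ge0 : 0 <= alpha) (alpha_le1 : alpha <= 1).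
Hypothesis theta_gt : - alpha < theta.
Hypothesis S_stirling : is_gen_stirling alpha S.
Hypotheses (n_gt0 : (0 < n)%N) (j_gt0 : (0 < j)%N).

Local Notation Vr l :=
  (Vpd alpha theta (n + m + 1) (j + l) / Vpd alpha theta n j).
Local Notation D := (rising (theta + n%:R) m.+1).

Lemma sum_Vpd_ratio_stirling (N : nat) (g : R) :
  \sum_(0 <= l < N.+1) Vr l * S N l g = rising (theta + j%:R * alpha - g) N / D.
Proof.
rewrite big_mkord -(gen_stirling_eval S_stirling) mulr_suml.
by apply: eq_bigr => l _; rewrite Vpd_ratio //; ring.
Qed.

Lemma sum_Vpd_ratio_stirling_shift (N : nat) (g : R) :
  \sum_(1 <= l < (N + 1).+1) Vr l * S N l.-1 g
    = (theta + j%:R * alpha) * rising (theta + j%:R * alpha + alpha - g) N / D.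
Proof.
rewrite big_add1 addn1 big_mkord -(gen_stirling_evalS S_stirling) mulr_suml.
by apply: eq_bigr => l _; rewrite Vpd_ratio //; ring.
Qed.

End PDGibbsSums.

Theorem proposition4 (R : realFieldType) (alpha theta : R)
  (S : nat -> nat -> R -> R) (n j m k : nat) (c : nat -> nat) :
  0 < alpha -> alpha < 1 -> - alpha < theta ->
  is_gen_stirling alpha S ->
  (1 <= n)%N -> (1 <= j <= n)%N ->
  (forall i, (n < i)%N -> c i = 0%N) ->
  (\sum_(1 <= i < n.+1) c i)%N = j ->
  (\sum_(1 <= i < n.+1) i * c i)%N = n ->
  (1 <= k)%N ->
  let V := Vpd alpha theta in
  let Unew := rising (1 - alpha) k * 'C(m, k)%:R *
      \sum_(1 <= l < (m - k + 1).+1)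
        V (n + m + 1)%N (j + l)%N / V n j
        * S (m - k)%N l.-1 (- (n%:R - j%:R * alpha)) in
  let Uold := \sum_(1 <= i < k.+1)
      (c i)%:R * 'C(m, k - i)%:R * rising (i%:R - alpha) (k - i + 1)
      * \sum_(0 <= l < (m + i - k).+1)
          V (n + m + 1)%N (j + l)%N / V n j
          * S (m + i - k)%N l (- (n%:R - j%:R * alpha - i%:R + alpha)) in
  Uold + Unew =
    \sum_(1 <= i < k.+1)
      (c i)%:R * 'C(m, k - i)%:R
      * (rising (theta + n%:R - i%:R + alpha) (m + i - k)
         * rising (i%:R - alpha) (k + 1 - i) / rising (theta + n%:R) m.+1)
    + (theta + j%:R * alpha) / (theta + n%:R) * 'C(m, k)%:R
      * (rising (1 - alpha) k * rising (theta + alpha + n%:R) (m - k)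
         / rising (theta + n%:R + 1) m).
Proof.
(* The identity holds term by term in i. *)
move=> alpha_gt0 alpha_lt1 theta_gt S_stirling n_gt0 /andP[j_gt0 _] _ _ _ _.
have [alpha_ge0 alpha_le1] := (ltW alpha_gt0, ltW alpha_lt1).
move=> V Unew Uold; congr (_ + _).
  apply: eq_big_nat => i /andP[_ i_le_k].
  have -> : (k + 1 - i = k - i + 1)%N by lia.
  have -> : theta + n%:R - i%:R + alpha
    = theta + j%:R * alpha - - (n%:R - j%:R * alpha - i%:R + alpha) by ring.
  by rewrite sum_Vpd_ratio_stirling //; ring.
rewrite /Unew /V sum_Vpd_ratio_stirling_shift // risingS.
have -> : theta + j%:R * alpha + alpha - - (n%:R - j%:R * alpha)
  = theta + alpha + n%:R by ring.
have n_ge1 : 1 <= n%:R :> R by rewrite ler1n.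
have theta_n_neq0 : theta + n%:R != 0 by rewrite gt_eqF //; lra.
have rising_neq0 : rising (theta + n%:R + 1) m != 0.
  by rewrite gt_eqF // rising_gt0 //; lra.
by field; rewrite rising_neq0 theta_n_neq0.
Qed.
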